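(* Let $J$ be a bounded open interval with $a>0$ on $J$, and let $x_0\in\partial J$ with $a(x_0)=0$. Let $\lambda\in\mathbb R$ and let $f\in C^1(J)$ be a bounded solution of $a(x)f'+H(x,f)=\lambda$ in $J$. Then $\lambda\ge\hat\lambda(x_0)$, and the limit $\lim_{x\to x_0,\,x\in J}f(x)$ exists and belongs to $\{p^-_\lambda(x_0),p^+_\lambda(x_0)\}$.
   Context: Deterministic setting: $a:\mathbb R\to[0,1]$ with $\sqrt a$ $\kappa$-Lipschitz. $H:\mathbb R\times\mathbb R\to\mathbb R$ belongs to $\mathscr H_{sqc}(\alpha_0,\alpha_1,\gamma,\eta)$ ($\gamma>2,\eta>0$): (H1) $\alpha_0|p|^\gamma-1/\alpha_0\le H(x,p)\le\alpha_1(|p|^\gamma+1)$, (H2) $|H(x,p)-H(x,q)|\le\alpha_1(|p|+|q|+1)^{\gamma-1}|p-q|$, (H3) $|H(x,p)-H(y,p)|\le\alpha_1(|p|^\gamma+1)|x-y|$, $H(x,\cdot)$ strictly quasiconvex with unique minimizer $\hat p(x)$, and $H(x,p_1)-H(x,p_2)\ge\eta|p_1-p_2|$ for $p_1<p_2\le\hat p(x)$, $H(x,p_2)-H(x,p_1)\ge\eta|p_1-p_2|$ for $p_2>p_1\ge\hat p(x)$. Notation: $\hat\lambda(x):=\min_pH(x,p)=H(x,\hat p(x))$; for $\lambda\ge\hat\lambda(x)$, $p^-_\lambda(x)\le p^+_\lambda(x)$ are defined by $\{p:H(x,p)\le\lambda\}=[p^-_\lambda(x),p^+_\lambda(x)]$.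 *)

From Stdlib Require Import Reals Lra.
From Coquelicot Require Import Coquelicot.
Open Scope R_scope.

(* Real power of a nonnegative base, with the convention 0^y = 0
   (Stdlib's Rpower 0 y = 1, which is wrong for |p|^gamma at p = 0). *)
Definition rpow (x y : R) : R := if Rle_dec x 0 then 0 else Rpower x y.

Definition diffusion_ok (kappa : R) (a : R -> R) : Prop :=
  (forall x, 0 <= a x <= 1) /\
  (forall x y, Rabs (sqrt (a x) - sqrt (a y)) <= kappa * Rabs (x - y)).

Definition strictly_quasiconvex (g : R -> R) : Prop :=
  forall p q t, p <> q -> 0 < t < 1 ->
    g (t * p + (1 - t) * q) < Rmax (g p) (g q).

Definition unique_minimizer (g : R -> R) (p : R) : Prop :=
  (forall q, g p <= g q) /\ (forall q, (forall r, g q <= g r) -> q = p).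

Definition H_sqc (alpha0 alpha1 gamma eta : R) (H : R -> R -> R)
    (phat : R -> R) : Prop :=
  0 < alpha0 /\ 0 < alpha1 /\ 2 < gamma /\ 0 < eta /\
  (forall x p, alpha0 * rpow (Rabs p) gamma - / alpha0 <= H x p /\
               H x p <= alpha1 * (rpow (Rabs p) gamma + 1)) /\
  (forall x p q, Rabs (H x p - H x q) <=
      alpha1 * rpow (Rabs p + Rabs q + 1) (gamma - 1) * Rabs (p - q)) /\
  (forall x y p, Rabs (H x p - H y p) <=
      alpha1 * (rpow (Rabs p) gamma + 1) * Rabs (x - y)) /\
  (forall x, strictly_quasiconvex (H x)) /\
  (forall x, unique_minimizer (H x) (phat x)) /\
  (forall x p1 p2, p1 < p2 -> p2 <= phat x ->
      H x p1 - H x p2 >= eta * Rabs (p1 - p2)) /\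
  (forall x p1 p2, p2 > p1 -> p1 >= phat x ->
      H x p2 - H x p1 >= eta * Rabs (p1 - p2)).

(* [pm, pp] = {p : H(x,p) <= lam}, i.e. pm = p^-_lam(x), pp = p^+_lam(x). *)
Definition sublevel_ends (H : R -> R -> R) (x lam pm pp : R) : Prop :=
  pm <= pp /\ forall p, H x p <= lam <-> pm <= p <= pp.

From Stdlib Require Import Reals Lra Classical.
From Coquelicot Require Import Coquelicot.
Open Scope R_scope.

(* Since sqrt a is kappa-Lipschitz and vanishes at x0, a(x) <= kappa^2 (x - x0)^2.  Hence if
   lam - H(x, f x) kept a fixed sign and stayed away from 0 near x0, the equation would force
   |f'| >= const / (x - x0)^2, which is not integrable at x0, contradicting the boundedness of f.
   At a level q with H(x0, q) <> lam, the equation fixes the sign of f' at every point near x0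
   where f = q, so f crosses q at most once there and eventually stays on one side of q.  As
   H(x0, .) takes the value lam at most twice, this squeezes f near x0 onto
   L := sup {q | eventually q < f}; the first argument then gives H(x0, L) = lam, so that
   lam >= H(x0, phat x0) and L is one of the two ends of the sublevel set. *)

Lemma rpow_ge0 (u y : R) : 0 <= rpow u y.
Proof. unfold rpow, Rpower; destruct (Rle_dec u 0); [lra | left; apply exp_pos]. Qed.

Lemma rpow_le_compat (u v y : R) : 0 <= u <= v -> 0 <= y -> rpow u y <= rpow v y.
Proof.
  intros Huv Hy; unfold rpow.
  destruct (Rle_dec u 0), (Rle_dec v 0); try lra.
  - unfold Rpower; left; apply exp_pos.
  - apply Rle_Rpower_l; lra.
Qed.

Section SqcHamiltonian.

Variables (alpha0 alpha1 gamma eta : R) (H : R -> R -> R) (phat : R -> R).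
Hypothesis HH : H_sqc alpha0 alpha1 gamma eta H phat.

Lemma H_sqc_min x p : H x (phat x) <= H x p.
Proof. destruct HH as (_ & _ & _ & _ & _ & _ & _ & _ & Hmin & _); exact (proj1 (Hmin x) p). Qed.

Lemma H_sqc_slope_left x p1 p2 :
  p1 <= p2 -> p2 <= phat x -> eta * (p2 - p1) <= H x p1 - H x p2.
Proof.
  destruct HH as (_ & _ & _ & _ & _ & _ & _ & _ & _ & Hdec & _).
  intros H12 H2; destruct (Rle_lt_or_eq_dec _ _ H12) as [Hlt | <-].
  - specialize (Hdec x p1 p2 Hlt H2); rewrite Rabs_left in Hdec by lra; lra.
  - lra.
Qed.

Lemma H_sqc_slope_right x p1 p2 :
  p1 <= p2 -> phat x <= p1 -> eta * (p2 - p1) <= H x p2 - H x p1.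
Proof.
  destruct HH as (_ & _ & _ & _ & _ & _ & _ & _ & _ & _ & Hinc).
  intros H12 H1; destruct (Rle_lt_or_eq_dec _ _ H12) as [Hlt | <-].
  - specialize (Hinc x p1 p2 Hlt ltac:(lra)); rewrite Rabs_left in Hinc by lra; lra.
  - lra.
Qed.

Lemma H_sqc_le_left x p q :
  p <= phat x -> q <= phat x -> (H x p <= H x q <-> q <= p).
Proof.
  destruct HH as (_ & _ & _ & Heta & _).
  intros Hp Hq; split; intros Hle.
  - apply Rnot_lt_le; intros Hlt.
    pose proof (H_sqc_slope_left x p q ltac:(lra) Hq); nra.
  - pose proof (H_sqc_slope_left x q p Hle Hp); nra.
Qed.

Lemma H_sqc_le_right x p q :
  phat x <= p -> phat x <= q -> (H x p <= H x q <-> p <= q).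
Proof.
  destruct HH as (_ & _ & _ & Heta & _).
  intros Hp Hq; split; intros Hle.
  - apply Rnot_lt_le; intros Hlt.
    pose proof (H_sqc_slope_right x q p ltac:(lra) Hq); nra.
  - pose proof (H_sqc_slope_right x p q Hle Hp); nra.
Qed.

Lemma H_sqc_continuous x0 p0 :
  filterlim (fun z : R * R => H (fst z) (snd z))
    (filter_prod (locally x0) (locally p0)) (locally (H x0 p0)).
Proof.
  destruct HH as (_ & Ha1 & Hg & _ & _ & Hlip_p & Hlip_x & _).
  set (Cp := alpha1 * rpow (2 * Rabs p0 + 2) (gamma - 1)).
  set (Cx := alpha1 * (rpow (Rabs p0) gamma + 1)).
  assert (HCp : 0 <= Cp) by (apply Rmult_le_pos; [lra | apply rpow_ge0]).
  assert (HCx : 0 <= Cx) by (pose proof (rpow_ge0 (Rabs p0) gamma); unfold Cx; nra).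
  apply filterlim_locally; intros eps.
  set (del := Rmin 1 (eps / (2 * (Cp + Cx + 1)))).
  assert (Hdel : 0 < del).
  { apply Rmin_glb_lt; [lra | apply Rdiv_lt_0_compat; [apply cond_pos | lra]]. }
  assert (Hdel1 : del <= 1) by apply Rmin_l.
  assert (Hdel_eps : (Cp + Cx + 1) * del <= eps / 2).
  { apply Rle_trans with ((Cp + Cx + 1) * (eps / (2 * (Cp + Cx + 1)))).
    - apply Rmult_le_compat_l; [lra | apply Rmin_r].
    - right; field; lra. }
  apply Filter_prod with (fun x => Rabs (x - x0) < del) (fun p => Rabs (p - p0) < del);
    try (exists (mkposreal del Hdel); intros y Hy; exact Hy).
  intros x p Hx Hp; change (Rabs (H x p - H x0 p0) < eps).
  assert (Hdp : Rabs (H x p - H x p0) <= Cp * Rabs (p - p0)).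
  { eapply Rle_trans; [apply Hlip_p |].
    apply Rmult_le_compat_r; [apply Rabs_pos |].
    apply Rmult_le_compat_l; [lra |].
    apply rpow_le_compat; [| lra].
    assert (Rabs p <= Rabs p0 + 1).
    { replace p with ((p - p0) + p0) by ring.
      pose proof (Rabs_triang (p - p0) p0); lra. }
    pose proof (Rabs_pos p); pose proof (Rabs_pos p0); lra. }
  assert (Hdx : Rabs (H x p0 - H x0 p0) <= Cx * Rabs (x - x0)) by apply Hlip_x.
  replace (H x p - H x0 p0) with ((H x p - H x p0) + (H x p0 - H x0 p0)) by ring.
  pose proof (Rabs_triang (H x p - H x p0) (H x p0 - H x0 p0)).
  pose proof (cond_pos eps).
  assert (Cp * Rabs (p - p0) <= Cp * del) by (apply Rmult_le_compat_l; lra).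
  assert (Cx * Rabs (x - x0) <= Cx * del) by (apply Rmult_le_compat_l; lra).
  nra.
Qed.

Lemma H_sqc_continuity x : continuity (H x).
Proof.
  intros p; apply continuity_pt_filterlim.
  apply (filterlim_comp_2 (F := locally p) (G := locally x) (H := locally p)
           (fun _ => x) (fun q => q) H);
    [apply filterlim_const | apply filterlim_id | apply H_sqc_continuous].
Qed.

Lemma H_sqc_level_left x lam :
  H x (phat x) <= lam -> exists pm, pm <= phat x /\ H x pm = lam.
Proof.
  destruct HH as (_ & _ & _ & Heta & _).
  intros Hl; set (P := phat x) in *; set (b := P - (lam - H x P) / eta).
  assert (Hstep : 0 <= (lam - H x P) / eta) by (apply Rdiv_le_0_compat; lra).
  assert (Hb : b <= P) by (unfold b; lra).
  assert (Hlb : lam <= H x b).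
  { pose proof (H_sqc_slope_left x b P Hb (Rle_refl _)).
    replace (eta * (P - b)) with (lam - H x P) in * by (unfold b; field; lra); lra. }
  destruct (IVT_gen (H x) b P lam (H_sqc_continuity x)) as [z [Hz Hzl]].
  { rewrite Rmin_right, Rmax_left by lra; lra. }
  exists z; rewrite Rmin_left, Rmax_right in Hz by lra; split; [lra | exact Hzl].
Qed.

Lemma H_sqc_level_right x lam :
  H x (phat x) <= lam -> exists pp, phat x <= pp /\ H x pp = lam.
Proof.
  destruct HH as (_ & _ & _ & Heta & _).
  intros Hl; set (P := phat x) in *; set (b := P + (lam - H x P) / eta).
  assert (Hstep : 0 <= (lam - H x P) / eta) by (apply Rdiv_le_0_compat; lra).
  assert (Hb : P <= b) by (unfold b; lra).
  assert (Hlb : lam <= H x b).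
  { pose proof (H_sqc_slope_right x P b Hb (Rle_refl _)).
    replace (eta * (b - P)) with (lam - H x P) in * by (unfold b; field; lra); lra. }
  destruct (IVT_gen (H x) P b lam (H_sqc_continuity x)) as [z [Hz Hzl]].
  { rewrite Rmin_left, Rmax_right by lra; lra. }
  exists z; rewrite Rmin_left, Rmax_right in Hz by lra; split; [lra | exact Hzl].
Qed.

Lemma H_sqc_sublevel_ends x lam p :
  H x p = lam -> exists pm pp, sublevel_ends H x lam pm pp /\ (p = pm \/ p = pp).
Proof.
  intros Hp.
  assert (Hl : H x (phat x) <= lam) by (rewrite <- Hp; apply H_sqc_min).
  destruct (H_sqc_level_left x lam Hl) as [pm [Hpm Hpml]].
  destruct (H_sqc_level_right x lam Hl) as [pp [Hpp Hppl]].
  exists pm, pp; split; [split; [lra |] |].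
  - intros q; destruct (Rle_or_lt q (phat x)) as [Hq | Hq].
    + rewrite <- Hpml, (H_sqc_le_left x q pm Hq Hpm); lra.
    + rewrite <- Hppl, (H_sqc_le_right x q pp ltac:(lra) Hpp); lra.
  - destruct (Rle_or_lt p (phat x)) as [Hq | Hq]; [left | right].
    + apply Rle_antisym;
        [apply (H_sqc_le_left x pm p Hpm Hq) | apply (H_sqc_le_left x p pm Hq Hpm)]; lra.
    + apply Rle_antisym; [apply (H_sqc_le_right x p pp) | apply (H_sqc_le_right x pp p)]; lra.
Qed.

Lemma H_sqc_off_level x lam p eps :
  0 < eps -> exists q, p < q < p + eps /\ H x q <> lam.
Proof.
  intros Heps.
  set (q1 := p + eps / 4); set (q2 := p + eps / 2); set (q3 := p + 3 * eps / 4).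
  destruct (Req_dec (H x q1) lam) as [E1 | E1]; [| exists q1; split; [unfold q1; lra | exact E1]].
  destruct (Req_dec (H x q2) lam) as [E2 | E2]; [| exists q2; split; [unfold q2; lra | exact E2]].
  exists q3; split; [unfold q3; lra |]; intros E3.
  destruct (Rle_or_lt q2 (phat x)) as [Hq2 | Hq2].
  - assert (q2 <= q1) by (apply (H_sqc_le_left x q1 q2); [unfold q1, q2 in *; lra | lra | lra]).
    unfold q1, q2 in *; lra.
  - assert (q3 <= q2) by (apply (H_sqc_le_right x q3 q2); [unfold q2, q3 in *; lra | lra | lra]).
    unfold q2, q3 in *; lra.
Qed.

End SqcHamiltonian.

Lemma is_derive_pos_locally (h : R -> R) (v l : R) :
  is_derive h v l -> 0 < l ->
  exists e, 0 < e /\ (forall t, v < t < v + e -> h v < h t) /\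
                      (forall t, v - e < t < v -> h t < h v).
Proof.
  intros Hd Hl; apply is_derive_Reals in Hd.
  destruct (Hd (l / 2)) as [e He]; [lra |].
  assert (Hquot : forall t, t <> v -> Rabs (t - v) < e ->
                   h t - h v = (h t - h v) / (t - v) * (t - v) /\
                   l / 2 < (h t - h v) / (t - v)).
  { intros t Htv Ht; split; [field; lra |].
    specialize (He (t - v) ltac:(lra) Ht); replace (v + (t - v)) with t in He by ring.
    apply Rabs_def2 in He; lra. }
  exists e; split; [apply cond_pos | split]; intros t Ht;
    destruct (Hquot t ltac:(lra) ltac:(apply Rabs_def1; lra)) as [Heq Hq]; nra.
Qed.

Lemma continuous_pos_locally (h : R -> R) (v : R) :
  continuous h v -> 0 < h v -> exists e, 0 < e /\ forall t, Rabs (t - v) < e -> 0 < h t.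
Proof.
  intros Hc Hv; destruct (proj1 (filterlim_locally h (h v)) Hc (mkposreal _ Hv)) as [e He].
  exists e; split; [apply cond_pos |]; intros t Ht.
  specialize (He t Ht); change (Rabs (h t - h v) < h v) in He; apply Rabs_def2 in He; lra.
Qed.

Lemma is_lub_approx (E : R -> Prop) (v s : R) :
  is_lub E v -> s < v -> exists t, E t /\ s < t.
Proof.
  intros [_ Hlub] Hs; apply NNPP; intros Hn.
  assert (v <= s); [| lra].
  apply Hlub; intros t Et; apply Rnot_lt_le; intros Hst; apply Hn; exists t; split; assumption.
Qed.

Section ZeroCrossing.

Variables (h dh : R -> R) (lo hi : R).
Hypothesis h_deriv : forall t, lo < t < hi -> is_derive h t (dh t).
Hypothesis h_up_at_zeros : forall t, lo < t < hi -> h t = 0 -> 0 < dh t.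

Lemma pos_right_of_nonneg v :
  lo < v < hi -> 0 <= h v -> exists e, 0 < e /\ forall t, v < t < v + e -> 0 < h t.
Proof.
  intros Hv Hhv; destruct (Rle_lt_or_eq_dec _ _ Hhv) as [Hpos | Hzero].
  - destruct (continuous_pos_locally h v) as [e [He Hnear]];
      [apply (ex_derive_continuous (V := R_NormedModule)); eexists; apply h_deriv; lra | lra |].
    exists e; split; [lra |]; intros t Ht; apply Hnear, Rabs_def1; lra.
  - destruct (is_derive_pos_locally h v (dh v)) as [e [He [Hright _]]];
      [apply h_deriv; lra | apply h_up_at_zeros; lra |].
    exists e; split; [lra |]; intros t Ht; specialize (Hright t Ht); lra.
Qed.

Lemma neg_left_of_nonpos v :
  lo < v < hi -> h v <= 0 -> exists e, 0 < e /\ forall t, v - e < t < v -> h t < 0.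
Proof.
  intros Hv Hhv; destruct (Rle_lt_or_eq_dec _ _ Hhv) as [Hneg | Hzero].
  - destruct (continuous_pos_locally (fun t => - h t) v) as [e [He Hnear]].
    + apply (ex_derive_continuous (V := R_NormedModule)); eexists.
      apply (is_derive_opp h); apply h_deriv; lra.
    + simpl; lra.
    + exists e; split; [lra |]; intros t Ht.
      assert (0 < - h t) by (apply Hnear, Rabs_def1; lra); lra.
  - destruct (is_derive_pos_locally h v (dh v)) as [e [He [_ Hleft]]];
      [apply h_deriv; lra | apply h_up_at_zeros; lra |].
    exists e; split; [lra |]; intros t Ht; specialize (Hleft t Ht); lra.
Qed.

Lemma pos_after_nonneg t1 t2 : lo < t1 -> t1 < t2 -> t2 < hi -> 0 <= h t1 -> 0 < h t2.
Proof.
  intros Hlo H12 Hhi Hh1.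
  set (S := fun t => t <= t2 /\ forall s, t1 <= s <= t -> 0 <= h s).
  assert (HS1 : S t1) by (split; [lra |]; intros s Hs; replace s with t1 by lra; exact Hh1).
  destruct (completeness S) as [v Hv_lub];
    [exists t2; intros t [Ht _]; exact Ht | exists t1; exact HS1 |].
  pose proof Hv_lub as [Hub Hlub].
  assert (Hv : t1 <= v <= t2) by (split; [apply Hub, HS1 | apply Hlub; intros t [Ht _]; exact Ht]).
  assert (Hbelow : forall s, t1 <= s < v -> 0 <= h s).
  { intros s Hs; destruct (is_lub_approx S v s Hv_lub (proj2 Hs)) as [t [[_ Ht] Hst]].
    apply Ht; lra. }
  assert (Hpos : t1 < v -> 0 < h v).
  { intros Hv1; apply Rnot_le_lt; intros Hle.
    destruct (neg_left_of_nonpos v ltac:(lra) Hle) as [e [He Hneg]].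
    set (s := Rmax t1 (v - e / 2)).
    assert (Hs : t1 <= s < v) by (split; [apply Rmax_l | apply Rmax_lub_lt; lra]).
    assert (v - e < s) by (pose proof (Rmax_r t1 (v - e / 2)); unfold s; lra).
    pose proof (Hneg s ltac:(lra)); pose proof (Hbelow s Hs); lra. }
  assert (Hhv : 0 <= h v).
  { destruct (Rle_lt_or_eq_dec t1 v (proj1 Hv)) as [Hlt | <-]; [left; auto | exact Hh1]. }
  assert (Hvt2 : v = t2).
  { destruct (Rle_lt_or_eq_dec v t2 (proj2 Hv)) as [Hlt | Heq]; [exfalso | exact Heq].
    destruct (pos_right_of_nonneg v ltac:(lra) Hhv) as [e [He Hright]].
    set (w := Rmin t2 (v + e / 2)).
    assert (Hw : v < w <= v + e / 2) by (split; [apply Rmin_glb_lt; lra | apply Rmin_r]).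
    assert (S w).
    { split; [apply Rmin_l |]; intros s Hs.
      destruct (Rtotal_order s v) as [Hsv | [-> | Hsv]].
      - apply Hbelow; lra.
      - exact Hhv.
      - left; apply Hright; lra. }
    assert (w <= v) by (apply Hub; assumption); lra. }
  rewrite <- Hvt2; apply Hpos; lra.
Qed.

End ZeroCrossing.

Local Notation near_end c d x0 := (within (fun x => c < x < d) (locally x0)).

Lemma small_denominator (num B E : R) :
  0 < num -> 0 < E -> exists e, 0 < e < E /\ B <= num / e.
Proof.
  intros Hn HE; set (e := Rmin (E / 2) (num / (Rabs B + 1))).
  assert (HB : 0 < Rabs B + 1) by (pose proof (Rabs_pos B); lra).
  assert (He : 0 < e) by (apply Rmin_glb_lt; [lra | apply Rdiv_lt_0_compat; lra]).
  assert (HeE : e < E) by (pose proof (Rmin_l (E / 2) (num / (Rabs B + 1))); unfold e in *; lra).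
  assert (Hen : (Rabs B + 1) * e <= num).
  { apply Rle_trans with ((Rabs B + 1) * (num / (Rabs B + 1)));
      [apply Rmult_le_compat_l; [lra | apply Rmin_r] | right; field; lra]. }
  exists e; split; [lra |].
  assert (Rabs B + 1 <= num / e).
  { apply Rmult_le_reg_r with e; [exact He |].
    replace (num / e * e) with num by (field; lra); exact Hen. }
  pose proof (Rle_abs B); lra.
Qed.

Lemma near_end_intro (c d x0 r : R) (P : R -> Prop) : 0 < r ->
  (forall x, c < x < d -> Rabs (x - x0) < r -> P x) -> near_end c d x0 P.
Proof. intros Hr HP; exists (mkposreal r Hr); intros x Hx Hcdx; exact (HP x Hcdx Hx). Qed.

Lemma near_end_elim (c d x0 : R) (P : R -> Prop) : c < d -> near_end c d x0 P ->
  exists r, 0 < r <= d - c /\ forall x, c < x < d -> Rabs (x - x0) < r -> P x.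
Proof.
  intros Hcd [r Hr]; exists (Rmin r (d - c)); split.
  - split; [apply Rmin_glb_lt; [apply cond_pos | lra] | apply Rmin_r].
  - intros x Hx Hxr; apply Hr; [| exact Hx].
    change (Rabs (x - x0) < r); eapply Rlt_le_trans; [exact Hxr | apply Rmin_l].
Qed.

Lemma near_end_imp (c d x0 : R) (P Q : R -> Prop) :
  (forall x, c < x < d -> P x -> Q x) -> near_end c d x0 P -> near_end c d x0 Q.
Proof.
  intros HPQ; apply (filter_imp (F := locally x0)); intros x HP Hx; exact (HPQ x Hx (HP Hx)).
Qed.

Section IntervalEnd.

Variables c d x0 : R.
Hypothesis Hcd : c < d.
Hypothesis Hx0 : x0 = c \/ x0 = d.

Lemma near_end_proper : ProperFilter (near_end c d x0).
Proof.
  constructor; [| apply within_filter, locally_filter].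
  intros P HP; destruct (near_end_elim c d x0 P Hcd HP) as [r [Hr HPr]].
  destruct Hx0 as [-> | ->]; [exists (c + r / 2) | exists (d - r / 2)];
    apply HPr; try lra; apply Rabs_def1; lra.
Qed.

Lemma eventually_sign (h dh : R -> R) :
  (forall t, c < t < d -> is_derive h t (dh t)) ->
  near_end c d x0 (fun t => h t = 0 -> 0 < dh t) ->
  near_end c d x0 (fun t => 0 < h t) \/ near_end c d x0 (fun t => h t < 0).
Proof.
  intros Hd Hz; destruct (near_end_elim c d x0 _ Hcd Hz) as [r [Hr Hzr]].
  destruct Hx0 as [-> | ->].
  - assert (Hcross : forall t1 t2, c < t1 -> t1 < t2 -> t2 < c + r -> 0 <= h t1 -> 0 < h t2).
    { apply (pos_after_nonneg h dh); intros s Hs; [apply Hd | apply Hzr]; try lra;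
        apply Rabs_def1; lra. }
    destruct (classic (exists t, c < t < c + r /\ h t <= 0)) as [[t [Ht Hht]] | Hno].
    + right; apply (near_end_intro c d c (t - c)); [lra |]; intros x Hx Hxr.
      apply Rabs_def2 in Hxr; apply Rnot_le_lt; intros Hhx.
      assert (0 < h t) by (apply (Hcross x t); lra); lra.
    + left; apply (near_end_intro c d c r); [lra |]; intros x Hx Hxr.
      apply Rabs_def2 in Hxr; apply Rnot_le_lt; intros Hhx.
      apply Hno; exists x; split; [lra | exact Hhx].
  - assert (Hcross : forall t1 t2, d - r < t1 -> t1 < t2 -> t2 < d -> 0 <= h t1 -> 0 < h t2).
    { apply (pos_after_nonneg h dh); intros s Hs; [apply Hd | apply Hzr]; try lra;
        apply Rabs_def1; lra. }
    destruct (classic (exists t, d - r < t < d /\ 0 <= h t)) as [[t [Ht Hht]] | Hno].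
    + left; apply (near_end_intro c d d (d - t)); [lra |]; intros x Hx Hxr.
      apply Rabs_def2 in Hxr; apply (Hcross t x); lra.
    + right; apply (near_end_intro c d d r); [lra |]; intros x Hx Hxr.
      apply Rabs_def2 in Hxr; apply Rnot_le_lt; intros Hhx.
      apply Hno; exists x; split; [lra | exact Hhx].
Qed.

Lemma bounded_deriv_blowup (g dg : R -> R) (delta M : R) : 0 < delta ->
  (forall x, c < x < d -> is_derive g x (dg x)) ->
  (forall x, c < x < d -> Rabs (g x) <= M) ->
  near_end c d x0 (fun x => delta <= dg x * (x - x0) ^ 2) -> False.
Proof.
  intros Hdel Hg HM Hrate; destruct (near_end_elim c d x0 _ Hcd Hrate) as [r [Hr Hrater]].
  (* G is increasing near x0, while G - g = delta / (2 (y - x0)) is unbounded there. *)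
  set (G := fun y => g y + delta / (2 * (y - x0))).
  set (dG := fun y => dg y - delta / (2 * (y - x0) ^ 2)).
  assert (HG : forall y, c < y < d -> Rabs (y - x0) < r -> is_derive G y (dG y) /\ 0 < dG y).
  { intros y Hy Hyr.
    assert (Hy0 : y - x0 <> 0) by (destruct Hx0; subst; lra).
    assert (Hsq : 0 < (y - x0) ^ 2) by (apply pow2_gt_0; exact Hy0).
    split.
    - unfold G, dG; apply (is_derive_plus g (fun y => delta / (2 * (y - x0)))); [apply Hg, Hy |].
      auto_derive; [lra | field; lra].
    - specialize (Hrater y Hy Hyr).
      assert (Hquot : delta / (2 * (y - x0) ^ 2) * (y - x0) ^ 2 = delta / 2) by (field; lra).
      unfold dG; nra. }
  assert (Hgb : forall y, c < y < d -> - M <= g y <= M)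
    by (intros; apply Rabs_le_between, HM; auto).
  destruct (small_denominator (delta / 2) (2 * M + delta / r) (r / 2)) as [e [He HB]];
    [lra | lra |].
  destruct Hx0 as [-> | ->].
  - assert (Hinc : G (c + e) < G (c + r / 2)).
    { apply (incr_function G c (c + r) dG); simpl; try lra;
        intros y Hy1 Hy2; apply HG; try lra; apply Rabs_def1; lra. }
    unfold G in Hinc.
    replace (delta / (2 * (c + e - c))) with (delta / 2 / e) in Hinc by (field; lra).
    replace (delta / (2 * (c + r / 2 - c))) with (delta / r) in Hinc by (field; lra).
    pose proof (Hgb (c + e) ltac:(lra)); pose proof (Hgb (c + r / 2) ltac:(lra)); lra.
  - assert (Hinc : G (d - r / 2) < G (d - e)).
    { apply (incr_function G (d - r) d dG); simpl; try lra;
        intros y Hy1 Hy2; apply HG; try lra; apply Rabs_def1; lra. }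
    unfold G in Hinc.
    replace (delta / (2 * (d - e - d))) with (- (delta / 2 / e)) in Hinc by (field; lra).
    replace (delta / (2 * (d - r / 2 - d))) with (- (delta / r)) in Hinc by (field; lra).
    pose proof (Hgb (d - e) ltac:(lra)); pose proof (Hgb (d - r / 2) ltac:(lra)); lra.
Qed.

End IntervalEnd.

Lemma diffusion_quadratic_bound (kappa : R) (a : R -> R) (x0 x : R) :
  diffusion_ok kappa a -> a x0 = 0 -> a x <= kappa ^ 2 * (x - x0) ^ 2.
Proof.
  intros [Ha01 Hlip] Hax0.
  specialize (Hlip x x0); rewrite Hax0, sqrt_0, Rminus_0_r in Hlip.
  pose proof (sqrt_pos (a x)); rewrite Rabs_right in Hlip by lra.
  pose proof (sqrt_sqrt (a x) (proj1 (Ha01 x))); pose proof (Rabs_pos (x - x0)).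
  rewrite <- (pow2_abs (x - x0)).
  assert (sqrt (a x) * sqrt (a x) <= (kappa * Rabs (x - x0)) * (kappa * Rabs (x - x0)))
    by (apply Rmult_le_compat; lra).
  nra.
Qed.

Lemma exists_sign_pos (u : R) : u <> 0 -> exists s, (s = 1 \/ s = -1) /\ 0 < s * u.
Proof. intros Hu; destruct (Rlt_or_le 0 u); [exists 1 | exists (-1)]; split; lra. Qed.

Section BoundaryLimit.

Variables (kappa alpha0 alpha1 gamma eta : R) (a : R -> R) (H : R -> R -> R) (phat : R -> R).
Variables (c d x0 lam M : R) (f : R -> R).
Hypothesis Ha : diffusion_ok kappa a.
Hypothesis HH : H_sqc alpha0 alpha1 gamma eta H phat.
Hypothesis Hcd : c < d.
Hypothesis Hpos : forall x, c < x < d -> 0 < a x.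
Hypothesis Hx0 : x0 = c \/ x0 = d.
Hypothesis Hax0 : a x0 = 0.
Hypothesis Hdiff : forall x, c < x < d -> ex_derive f x.
Hypothesis Hbdd : forall x, c < x < d -> Rabs (f x) <= M.
Hypothesis Heq : forall x, c < x < d -> a x * Derive f x + H x (f x) = lam.

Lemma near_end_id : filterlim (fun x => x) (near_end c d x0) (locally x0).
Proof. intros P HP; apply (filter_le_within (F := locally x0)), HP. Qed.

Lemma near_end_H_along (g : R -> R) (L : R) :
  filterlim g (near_end c d x0) (locally L) ->
  filterlim (fun x => H x (g x)) (near_end c d x0) (locally (H x0 L)).
Proof.
  intros Hg; apply (filterlim_comp_2 (fun x => x) g H near_end_id Hg).
  apply (H_sqc_continuous _ _ _ _ _ _ HH).
Qed.

Lemma no_eventual_gap (s delta : R) : (s = 1 \/ s = -1) -> 0 < delta ->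
  near_end c d x0 (fun x => delta <= s * (lam - H x (f x))) -> False.
Proof.
  intros Hs Hdel Hgap.
  assert (Hk : 0 < kappa ^ 2).
  { set (m := (c + d) / 2).
    pose proof (Hpos m ltac:(unfold m; lra)).
    pose proof (diffusion_quadratic_bound kappa a x0 m Ha Hax0).
    pose proof (pow2_ge_0 kappa); pose proof (pow2_ge_0 (m - x0)); nra. }
  apply (bounded_deriv_blowup c d x0 Hcd Hx0 (fun x => s * f x) (fun x => s * Derive f x)
           (delta / kappa ^ 2) M).
  - apply Rdiv_lt_0_compat; lra.
  - intros x Hx; apply is_derive_scal, Derive_correct, Hdiff, Hx.
  - intros x Hx; rewrite Rabs_mult; destruct Hs as [-> | ->];
      rewrite ?Rabs_R1, ?Rabs_m1, Rmult_1_l; apply Hbdd, Hx.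
  - apply (near_end_imp c d x0 _ _) with (2 := Hgap); intros x Hx' Hx.
    assert (Hax : 0 < a x) by (apply Hpos, Hx').
    assert (Hbound := diffusion_quadratic_bound kappa a x0 x Ha Hax0).
    rewrite <- (Heq x Hx') in Hx.
    replace (s * (a x * Derive f x + H x (f x) - H x (f x))) with (s * Derive f x * a x) in Hx
      by ring.
    assert (Hsf : 0 < s * Derive f x) by nra.
    apply Rmult_le_reg_r with (kappa ^ 2); [exact Hk |].
    replace (delta / kappa ^ 2 * kappa ^ 2) with delta by (field; nra).
    assert (s * Derive f x * a x <= s * Derive f x * (kappa ^ 2 * (x - x0) ^ 2))
      by (apply Rmult_le_compat_l; lra).
    lra.
Qed.

Lemma eventually_off_level (q : R) : H x0 q <> lam ->
  near_end c d x0 (fun x => q < f x) \/ near_end c d x0 (fun x => f x < q).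
Proof.
  intros Hq.
  destruct (exists_sign_pos (lam - H x0 q)) as [s [Hs Hsu]]; [lra |].
  assert (Hnear : near_end c d x0 (fun x => Rabs (H x q - H x0 q) < s * (lam - H x0 q)))
    by exact (proj1 (filterlim_locally _ _) (near_end_H_along (fun _ => q) q (filterlim_const q))
                (mkposreal _ Hsu)).
  destruct (eventually_sign c d x0 Hcd Hx0 (fun x => s * (f x - q)) (fun x => s * Derive f x))
    as [Hev | Hev].
  - intros x Hx; apply is_derive_scal; auto_derive; [apply Hdiff, Hx | apply Rmult_1_l].
  - apply (near_end_imp c d x0 _ _) with (2 := Hnear); intros x Hx Hclose Hzero.
    assert (Hfx : f x = q) by (destruct Hs as [-> | ->]; lra).
    assert (Hax : 0 < a x) by (apply Hpos, Hx).
    assert (Hder : s * Derive f x * a x = s * (lam - H x q))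
      by (rewrite <- (Heq x Hx), Hfx; ring).
    apply Rabs_def2 in Hclose.
    assert (0 < s * (lam - H x q)) by (destruct Hs as [-> | ->]; lra).
    nra.
  - destruct Hs as [-> | ->]; [left | right]; apply (near_end_imp c d x0 _ _) with (2 := Hev);
      intros; lra.
  - destruct Hs as [-> | ->]; [right | left]; apply (near_end_imp c d x0 _ _) with (2 := Hev);
      intros; lra.
Qed.

Lemma solution_limit_exists : exists L, filterlim f (near_end c d x0) (locally L).
Proof.
  pose proof (near_end_proper c d x0 Hcd Hx0).
  set (S := fun q => near_end c d x0 (fun x => q < f x)).
  assert (Hbnd : near_end c d x0 (fun x => Rabs (f x) <= M)) by exact (filter_forall _ Hbdd).
  destruct (completeness S) as [L HL].
  { exists M; intros q Sq; apply (filter_const (F := near_end c d x0)).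
    apply (near_end_imp c d x0 _ _) with (2 := filter_and _ _ Sq Hbnd); intros x _ [Hq HxM].
    pose proof (Rle_abs (f x)); lra. }
  { exists (- M - 1); apply (near_end_imp c d x0 _ _) with (2 := Hbnd); intros x _ HxM.
    apply Rabs_le_between in HxM; lra. }
  exists L; apply filterlim_locally; intros eps; pose proof (cond_pos eps).
  assert (Habove : near_end c d x0 (fun x => L - eps < f x)).
  { destruct (is_lub_approx S L (L - eps) HL) as [q [Sq Hq]]; [lra |].
    apply (near_end_imp c d x0 _ _) with (2 := Sq); intros; lra. }
  destruct (H_sqc_off_level _ _ _ _ _ _ HH x0 lam L eps (cond_pos eps)) as [q [Hq Hqlam]].
  destruct (eventually_off_level q Hqlam) as [Hup | Hbelow].
  - assert (q <= L) by (apply (proj1 HL), Hup); lra.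
  - apply (near_end_imp c d x0 _ _) with (2 := filter_and _ _ Habove Hbelow);
      intros x _ [Hx1 Hx2].
    change (Rabs (f x - L) < eps); apply Rabs_def1; lra.
Qed.

Lemma solution_limit_level (L : R) : filterlim f (near_end c d x0) (locally L) -> H x0 L = lam.
Proof.
  intros Hlim; apply NNPP; intros HL.
  destruct (exists_sign_pos (lam - H x0 L)) as [s [Hs Hsu]]; [lra |].
  assert (Hhalf : 0 < s * (lam - H x0 L) / 2) by lra.
  apply (no_eventual_gap s _ Hs Hhalf).
  apply (near_end_imp c d x0 _ _)
    with (2 := proj1 (filterlim_locally _ _) (near_end_H_along f L Hlim) (mkposreal _ Hhalf)).
  intros x _ Hclose; change (Rabs (H x (f x) - H x0 L) < s * (lam - H x0 L) / 2) in Hclose.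
  apply Rabs_def2 in Hclose; destruct Hs as [-> | ->]; lra.
Qed.

End BoundaryLimit.

Theorem mainTheorem9
  (kappa alpha0 alpha1 gamma eta : R) (a : R -> R) (H : R -> R -> R)
  (phat : R -> R)
  (Ha : diffusion_ok kappa a)
  (HH : H_sqc alpha0 alpha1 gamma eta H phat)
  (c d : R) (Hcd : c < d)
  (Hpos : forall x, c < x < d -> 0 < a x)
  (x0 : R) (Hx0 : x0 = c \/ x0 = d) (Hax0 : a x0 = 0)
  (lam : R) (f : R -> R)
  (Hdiff : forall x, c < x < d -> ex_derive f x)
  (Hcont : forall x, c < x < d -> continuous (Derive f) x)
  (Hbdd : exists M, forall x, c < x < d -> Rabs (f x) <= M)
  (Heq : forall x, c < x < d -> a x * Derive f x + H x (f x) = lam) :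
  lam >= H x0 (phat x0) /\
  exists L : R,
    filterlim f (within (fun x => c < x < d) (locally x0)) (locally L) /\
    exists pm pp : R, sublevel_ends H x0 lam pm pp /\ (L = pm \/ L = pp).
Proof.
  destruct Hbdd as [M HM].
  destruct (solution_limit_exists alpha0 alpha1 gamma eta a H phat c d x0 lam M f)
    as [L HL]; try eassumption.
  assert (Hlevel : H x0 L = lam)
    by (eapply solution_limit_level; eassumption).
  split; [rewrite <- Hlevel; apply Rle_ge, (H_sqc_min _ _ _ _ _ _ HH) |].
  exists L; split; [exact HL |].
  exact (H_sqc_sublevel_ends _ _ _ _ _ _ HH x0 lam L Hlevel).
Qed.
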